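(* With the setting in the context, for all $s\in\mathrm{hom}(C,G)_{-1}$ and $v\in\mathrm{hom}(C,G)^1$, $$\sum_{t\in\mathrm{hom}(C,G)^{-1}}\chi_s(t)A_t=\prod_n\prod_{x\in K_n}\sum_{g\in G_{n+1}}\chi_s(gx^* )A_{gx^*},\qquad \sum_{m\in\mathrm{hom}(C,G)_1}\chi_m(v)B_m=\prod_n\prod_{x\in K_n}\sum_{r\in\widehat{G}_{n-1}}\chi_{rx_*}(v)B_{rx_*}.$$
   Context: $(C_\bullet,\partial^C_\bullet)$ is a chain complex with each $C_n$ free abelian on a finite set $K_n$, $K_n\ne\emptyset$ for finitely many $n$; $(G_\bullet,\partial^G_\bullet)$ is a chain complex of finite abelian groups, $\widehat{G}_k=\mathrm{Hom}(G_k,U(1))$. $\mathrm{hom}(C,G)^p=\prod_n\mathrm{Hom}(C_n,G_{n-p})$ with $(\delta^pf)_n=f_{n-1}\partial^C_n-(-1)^p\partial^G_{n-p}f_n$. $\mathrm{hom}(C,G)_p=\mathrm{Hom}(\mathrm{hom}(C,G)^p,U(1))$ (written additively), $\chi_m(f)=m(f)$, $\delta_1m=m\circ\delta^0$. $\mathcal H=\bigotimes_n\bigotimes_{x\in K_n}\mathbb C[G_n]$ with orthonormal basis $|f\rangle$, $f\in\mathrm{hom}(C,G)^0$; $P_t|f\rangle=|f+t\rangle$, $Q_m|f\rangle=\chi_m(f)|f\rangle$; $A_t=P_{\delta^{-1}t}$ ($t\in\mathrm{hom}(C,G)^{-1}$), $B_m=Q_{\delta_1m}$ ($m\in\mathrm{hom}(C,G)_1$).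 For $x\in K_n$, $g\in G_{n-p}$, $gx^*\in\mathrm{hom}(C,G)^p$ has $n$-th component sending $x\mapsto g$ and other elements of $K_n$ to $0$, other components $0$; for $r\in\widehat G_{n-p}$, $rx_*\in\mathrm{hom}(C,G)_p$ is $rx_*(f)=r(f_n(x))$. *)

From HB Require Import structures.
From mathcomp Require Import all_boot all_order all_algebra all_field.
From mathcomp Require Import classical_sets fsbigop.
From mathcomp Require Import zify.

Set Implicit Arguments.
Unset Strict Implicit.
Unset Printing Implicit Defensive.

Import Order.TTheory GRing.Theory Num.Theory.
Local Open Scope ring_scope.

Section TQFT.

(* The chain complex C: X is the (finite) disjoint union of the bases K_n,
   deg x = n  iff  x \in K_n; bdC x y = coefficient of y in  d^C x. *)
Variable X : finType.
Variable deg : X -> int.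
Variable bdC : X -> X -> int.
Variable G : int -> finZmodType.
Variable dG : forall k : int, {additive G k -> G (k - 1)}.

Definition K (n : int) : {set X} := [set x | deg x == n].

Definition castG (i j : int) (e : i = j) (a : G i) : G j := eq_rect i G a j e.

(* cochain(C,G)^p = prod_n Hom(C_n, G_{n-p}) = prod_n prod_{x in K_n} G_{n-p} *)
Definition cochain (p : int) := {dffun forall x : X, G (deg x - p)}.
HB.instance Definition _ (p : int) := Finite.on (cochain p).

Definition hadd (p : int) (f t : cochain p) : cochain p := [ffun x => f x + t x].

Lemma deg_shift1 (p : int) (x y : X) :
  deg y = deg x - 1 -> deg y - p = deg x - (p + 1).
Proof. move=> ->; lia. Qed.

Lemma deg_shift2 (p : int) (x : X) : deg x - p - 1 = deg x - (p + 1).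
Proof. lia. Qed.

(* (d^C-part of) the coboundary:  f_{n-1} \o d^C_n  evaluated at x *)
Definition bd_term (p : int) (f : cochain p) (x y : X) : G (deg x - (p + 1)) :=
  match deg y =P deg x - 1 with
  | ReflectT e => castG (deg_shift1 p e) (f y *~ bdC x y)
  | ReflectF _ => 0
  end.

Definition delta (p : int) (f : cochain p) : cochain (p + 1) :=
  [ffun x => \sum_(y : X) bd_term f x y
             - castG (deg_shift2 p x) (dG (deg x - p) (f x)) *~ ((-1) ^ p)].

(* cochain(C,G)_p = Hom(cochain(C,G)^p, U(1)), U(1) = unit circle in algC *)
Definition is_char (A : finType) (add : A -> A -> A) (m : {ffun A -> algC}) :=
  (forall a b, m (add a b) = m a * m b) /\ (forall a, `|m a| = 1).

Definition hom_lo (p : int) : set {ffun cochain p -> algC} :=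
  [set m | is_char (@hadd p) m].

Definition dualG (k : int) : set {ffun G k -> algC} :=
  [set r | is_char (fun a b : G k => a + b) r].

(* Operators on H = (x)_n (x)_{x in K_n} C[G_n], with orthonormal basis
   |f>, f in cochain^0, represented by their matrix  op f' f = <f'|O|f>. *)
Local Notation state := (cochain 0).
Definition op := {ffun state -> {ffun state -> algC}}.
HB.instance Definition _ := GRing.Zmodule.on op.

Definition opscale (c : algC) (A : op) : op := [ffun f' => [ffun f => c * A f' f]].

Definition opmul (A B : op) : op :=
  [ffun f => [ffun g => \sum_(h : state) A f h * B h g]].
Definition opone : op := [ffun f => [ffun g => (f == g)%:R]].

Definition Pop (t : state) : op := [ffun f' => [ffun f => (f' == hadd f t)%:R]].
Definition Qop (m : {ffun state -> algC}) : op :=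
  [ffun f' => [ffun f => (f' == f)%:R * m f]].

Definition Aop (t : cochain (-1)) : op := Pop (delta t).
Definition Bop (m : {ffun cochain 1 -> algC}) : op := Qop [ffun f : state => m (delta f)].

Definition upstar (p : int) (x : X) (g : G (deg x - p)) : cochain p :=
  [ffun y => match x =P y with
             | ReflectT e => eq_rect x (fun z => G (deg z - p)) g y e
             | ReflectF _ => 0 end].

Definition lowstar (p : int) (x : X) (r : {ffun G (deg x - p) -> algC})
  : {ffun cochain p -> algC} := [ffun f : cochain p => r (f x)].

Definition degs : seq int := undup [seq deg x | x <- enum X].

End TQFT.

From HB Require Import structures.
From mathcomp Require Import all_boot all_order all_algebra all_field.
From mathcomp Require Import fingroup cyclic.
From mathcomp Require Import classical_sets functions fsbigop.
Import GRing.Theory Num.Theory.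
Local Open Scope ring_scope.

Set Implicit Arguments.
Unset Strict Implicit.
Unset Printing Implicit Defensive.

(* Both sums run over a finite abelian group that is a product over the basis
   elements x of C: a cochain t in hom(C,G)^{-1} is the tuple of its values
   t(x) in G_{n+1}, and, a character of a finite product being the product of
   its restrictions to the factors, a character m of hom(C,G)^1 is a tuple of
   characters r_x of G_{n-1}.  The summands t |-> chi_s(t) A_t and
   m |-> chi_m(v) B_m turn elements with disjoint supports into products of
   operators, so expanding the product of the one-point sums by
   distributivity gives back the sum over the whole group.  To sum over
   characters as over a finite type, a character of a finite group V is
   written as the exponents of its values with respect to a fixed primitive
   #|V|-th root of unity. *)

Lemma sum_mul_eq1r (T : finType) (c : T) (F : T -> algC) :
  \sum_(h : T) F h * (h == c)%:R = F c.
Proof.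
rewrite (bigD1 c) //= eqxx mulr1 big1 ?addr0 // => h /negbTE ->.
by rewrite mulr0.
Qed.

Section Operators.
Variables (X : finType) (deg : X -> int) (G : int -> finZmodType).
Local Notation state := (cochain deg G 0).
Local Notation op := (@op X deg G).
Local Notation opmul := (@opmul X deg G).
Local Notation opscale := (@opscale X deg G).

Lemma opmulDl : left_distributive opmul +%R.
Proof.
move=> A B C; apply/ffunP => f; rewrite !ffunE; apply/ffunP => g; rewrite !ffunE.
by rewrite -big_split /=; apply: eq_bigr => h _; rewrite !ffunE mulrDl.
Qed.

Lemma opmulDr : right_distributive opmul +%R.
Proof.
move=> A B C; apply/ffunP => f; rewrite !ffunE; apply/ffunP => g; rewrite !ffunE.
by rewrite -big_split /=; apply: eq_bigr => h _; rewrite !ffunE mulrDr.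
Qed.

Lemma opmul0l : left_zero 0 opmul.
Proof.
move=> A; apply/ffunP => f; rewrite !ffunE; apply/ffunP => g; rewrite !ffunE.
by rewrite big1 // => h _; rewrite !ffunE mul0r.
Qed.

Lemma opmul0r : right_zero 0 opmul.
Proof.
move=> A; apply/ffunP => f; rewrite !ffunE; apply/ffunP => g; rewrite !ffunE.
by rewrite big1 // => h _; rewrite !ffunE mulr0.
Qed.

Lemma opscale1 (A : op) : opscale 1 A = A.
Proof. by apply/ffunP => f; rewrite ffunE; apply/ffunP => g; rewrite !ffunE mul1r. Qed.

Lemma opmul_scale (a b : algC) (A B : op) :
  opmul (opscale a A) (opscale b B) = opscale (a * b) (opmul A B).
Proof.
apply/ffunP => f; rewrite !ffunE; apply/ffunP => g; rewrite !ffunE mulr_sumr.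
by apply: eq_bigr => h _; rewrite !ffunE mulrACA.
Qed.

Definition cochain0 (p : int) : cochain deg G p := [ffun x => 0].

Lemma haddE (p : int) (f t : cochain deg G p) x : hadd f t x = f x + t x.
Proof. by rewrite ffunE. Qed.

Lemma haddC (p : int) : commutative (@hadd X deg G p).
Proof. by move=> f t; apply/ffunP => x; rewrite !ffunE; apply: addrC. Qed.

Lemma haddA (p : int) : associative (@hadd X deg G p).
Proof. by move=> f t u; apply/ffunP => x; rewrite !ffunE; apply: addrA. Qed.

Lemma hadd0 (p : int) : right_id (cochain0 p) (@hadd X deg G p).
Proof. by move=> f; apply/ffunP => x; rewrite !ffunE; apply: addr0. Qed.

Lemma opmul_Pop (a b : state) : opmul (Pop a) (Pop b) = Pop (hadd a b).
Proof.
apply/ffunP => f; rewrite !ffunE; apply/ffunP => g; rewrite !ffunE.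
under eq_bigr => h _ do rewrite !ffunE.
by rewrite sum_mul_eq1r -haddA (haddC b).
Qed.

Lemma Pop0 : Pop (cochain0 0) = opone deg G.
Proof. by apply/ffunP => f; rewrite !ffunE; apply/ffunP => g; rewrite !ffunE hadd0. Qed.

Lemma opmul_Qop (a b : {ffun state -> algC}) :
  opmul (Qop a) (Qop b) = Qop [ffun f => a f * b f].
Proof.
apply/ffunP => f; rewrite !ffunE; apply/ffunP => g; rewrite !ffunE.
under eq_bigr => h _ do rewrite !ffunE.
rewrite (bigD1 f) //= big1 ?addr0 => [|h /negbTE]; last by rewrite eq_sym => ->; rewrite !mul0r.
by rewrite eqxx mul1r; case: eqP => [->|_]; rewrite ?mul1r ?mul0r ?mulr0.
Qed.

Lemma Qop1 : Qop [ffun=> 1] = opone deg G.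
Proof. by apply/ffunP => f; rewrite !ffunE; apply/ffunP => g; rewrite !ffunE mulr1. Qed.

End Operators.

Section Coboundary.
Variables (X : finType) (deg : X -> int) (bdC : X -> X -> int)
  (G : int -> finZmodType) (dG : forall k : int, {additive G k -> G (k - 1)}).

Lemma castG0 (i j : int) (e : i = j) : @castG G i j e 0 = 0.
Proof. by case: j / e. Qed.

Lemma castGD (i j : int) (e : i = j) (a b : G i) :
  castG e (a + b) = castG e a + castG e b.
Proof. by case: j / e. Qed.

Lemma deltaD (p : int) (f t : cochain deg G p) :
  delta bdC dG (hadd f t) = hadd (delta bdC dG f) (delta bdC dG t).
Proof.
apply/ffunP => x; rewrite !ffunE.
have -> : \sum_y bd_term bdC (hadd f t) x y =
          \sum_y bd_term bdC f x y + \sum_y bd_term bdC t x y.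
  rewrite -big_split /=; apply: eq_bigr => y _; rewrite /bd_term.
  by case: eqP => e; rewrite ?addr0 // ffunE mulrzDl castGD.
rewrite (raddfD (dG (deg x - p))) castGD mulrzDl.
(* Rewriting with [opprD] in place fails: it also matches the index [deg x - (p + 1)]. *)
have subDD (V : zmodType) (a b c d : V) : a + b - (c + d) = a - c + (b - d).
  by rewrite opprD addrACA.
exact: subDD.
Qed.

Lemma delta0 (p : int) : delta bdC dG (cochain0 deg G p) = cochain0 deg G (p + 1).
Proof.
apply/ffunP => x; rewrite !ffunE big1 => [|y _]; last first.
  by rewrite /bd_term; case: eqP => // e; rewrite ffunE mul0rz castG0.
by rewrite (raddf0 (dG (deg x - p))) castG0 mul0rz subr0.
Qed.

Lemma opmul_Aop (t t' : cochain deg G (-1)) :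
  opmul (Aop bdC dG t) (Aop bdC dG t') = Aop bdC dG (hadd t t').
Proof. by rewrite /Aop opmul_Pop deltaD. Qed.

Lemma Aop0 : Aop bdC dG (cochain0 deg G (-1)) = opone deg G.
Proof. by rewrite /Aop delta0; apply: Pop0. Qed.

Lemma opmul_Bop (m m' : {ffun cochain deg G 1 -> algC}) :
  opmul (Bop bdC dG m) (Bop bdC dG m') = Bop bdC dG [ffun f => m f * m' f].
Proof. by rewrite /Bop opmul_Qop; congr Qop; apply/ffunP => f; rewrite !ffunE. Qed.

Lemma Bop1 : Bop bdC dG [ffun=> 1] = opone deg G.
Proof. by rewrite /Bop -Qop1; congr Qop; apply/ffunP => f; rewrite !ffunE. Qed.

End Coboundary.

Section Characters.
Variables (X : finType) (deg : X -> int) (G : int -> finZmodType).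
Local Notation ustar x g := (@upstar X deg G _ x g).

Lemma is_char_idem (A : finType) (add : A -> A -> A) (m : {ffun A -> algC}) (a : A) :
  is_char add m -> add a a = a -> m a = 1.
Proof.
move=> [mM mN] aa; have m_neq0 : m a != 0 by rewrite -normr_eq0 mN oner_eq0.
by apply: (mulfI m_neq0); rewrite -mM aa mulr1.
Qed.

Lemma upstar_dfwith (p : int) (x : X) (g : G (deg x - p)) :
  ustar x g = finfun (dfwith (fun y => 0 : G (deg y - p)) g).
Proof.
by apply/ffunP => y; rewrite !ffunE; case: eqP.
Qed.

Lemma upstar_id (p : int) (x : X) (g : G (deg x - p)) : ustar x g x = g.
Proof. by rewrite upstar_dfwith ffunE dfwith_in. Qed.

Lemma upstar_neq (p : int) (x y : X) (g : G (deg x - p)) : x != y -> ustar x g y = 0.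
Proof. by move=> xy; rewrite upstar_dfwith ffunE dfwith_out. Qed.

Lemma upstarD (p : int) (x : X) (a b : G (deg x - p)) :
  ustar x (a + b) = hadd (ustar x a) (ustar x b).
Proof.
apply/ffunP => y; rewrite [RHS]ffunE; case: (eqVneq x y) => [<-|xy].
  by rewrite !upstar_id.
by rewrite !upstar_neq // addr0.
Qed.

Lemma char_prod_upstar (p : int) (m : {ffun cochain deg G p -> algC}) :
  is_char (@hadd X deg G p) m -> forall f, m f = \prod_x m (ustar x (f x)).
Proof.
move=> mc f.
pose restr (r : seq X) : cochain deg G p := [ffun y => if y \in r then f y else 0].
have restr_cons y r : y \notin r -> restr (y :: r) = hadd (ustar y (f y)) (restr r).
  move=> yr; apply/ffunP => z; rewrite /hadd [RHS]ffunE.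
  case: (eqVneq y z) => [<-|yz]; [rewrite upstar_id | rewrite upstar_neq //];
    rewrite !ffunE in_cons ?eqxx ?(negbTE yr) ?addr0 //.
  by rewrite eq_sym (negbTE yz) add0r.
have restrT : restr (index_enum X) = f.
  by apply/ffunP => z; rewrite ffunE mem_index_enum.
rewrite -{1}restrT; elim: (index_enum X) (index_enum_uniq X) => [_|y r IHr].
  rewrite big_nil -(is_char_idem mc (hadd0 (cochain0 deg G p))).
  by congr (m _); apply/ffunP => z; rewrite !ffunE.
by move=> /andP[yr ur]; rewrite big_cons -IHr // restr_cons // (proj1 mc).
Qed.

End Characters.

Section Factorization.
Variables (R : nmodType) (mul : R -> R -> R) (one : R).
Hypotheses (mul0x : left_zero 0 mul) (mulx0 : right_zero 0 mul).
Hypotheses (mulDx : left_distributive mul +%R) (mulxD : right_distributive mul +%R).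

Lemma mul_sum (I J : finType) (P : pred I) (Q : pred J) (F : I -> R) (F' : J -> R) :
  mul (\sum_(i | P i) F i) (\sum_(j | Q j) F' j)
  = \sum_(i | P i) \sum_(j | Q j) mul (F i) (F' j).
Proof.
rewrite (big_morph (mul^~ _) (fun a b => mulDx a b _) (mul0x _)).
by apply: eq_bigr => i _; rewrite (big_morph (mul _) (mulxD _) (mulx0 _)).
Qed.

Variables (X : finType) (T : X -> finType) (e : forall x, T x) (ok : forall x, pred (T x)).
Local Notation I := {dffun forall x, T x}.
Variable W : I -> R.

Definition admissible (D : {set X}) (u : I) : bool :=
  [forall x, if x \in D then ok (u x) else u x == e x].

Definition partial_sum (D : {set X}) : R := \sum_(u | admissible D u) W u.

Definition splice (D : {set X}) (u u' : I) : I := [ffun x => if x \in D then u x else u' x].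

Hypothesis W_base : W (finfun e) = one.
Hypothesis W_splice : forall (A B : {set X}) (u u' : I), [disjoint A & B]%B ->
  admissible A u -> admissible B u' -> W (splice A u u') = mul (W u) (W u').

Lemma admissibleP (D : {set X}) (u : I) :
  reflect (forall x, if x \in D then ok (u x) else u x == e x) (admissible D u).
Proof. exact: forallP. Qed.

Lemma partial_sum0 : partial_sum finset.set0 = one.
Proof.
rewrite /partial_sum (big_pred1 (finfun e : I)) // => u /=.
apply/admissibleP/eqP => [ue|-> x]; last by rewrite inE ffunE.
by apply/ffunP => x; rewrite ffunE; move: (ue x); rewrite inE => /eqP.
Qed.

Lemma partial_sumU (A B : {set X}) : [disjoint A & B]%B ->
  partial_sum (A :|: B) = mul (partial_sum A) (partial_sum B).
Proof.
move=> AB; pose split (w : I) := (splice A w (finfun e), splice B w (finfun e)).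
have admissible_split u u' :
    admissible (A :|: B) (splice A u u') && (split (splice A u u') == (u, u'))
    = admissible A u && admissible B u'.
  apply/andP/andP => [[/admissibleP uu' /eqP[<- <-]] | [/admissibleP uA /admissibleP u'B]].
    split; apply/admissibleP => x; move: (uu' x); rewrite !ffunE inE;
      by case: (x \in A); case: (x \in B).
  split.
    apply/admissibleP => x; rewrite ffunE inE; move: (uA x) (u'B x).
    by case: (x \in A) => //; case: (x \in B).
  apply/eqP; congr pair; apply/ffunP => x; rewrite !ffunE.
    by move: (uA x); case: (x \in A) => // /eqP.
  move: (u'B x); case: ifP => xB; last by move=> /eqP.
  by rewrite (disjointFl AB xB).
rewrite /partial_sum mul_sum pair_big_dep /=.
rewrite (reindex_onto (fun uu => splice A uu.1 uu.2) split) /=; last first.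
  move=> w /admissibleP wAB; apply/ffunP => x; rewrite !ffunE.
  case: (boolP (x \in A)) => // xA; case: (boolP (x \in B)) => // xB.
  by move: (wAB x); rewrite inE (negbTE xA) (negbTE xB) => /eqP.
apply: eq_big => [[u u'] | [u u']]; first exact: admissible_split.
by rewrite admissible_split => /andP[uA u'B]; exact: W_splice AB uA u'B.
Qed.

Lemma big_partial_sum (J : eqType) (r : seq J) (P : pred J) (A : J -> {set X}) :
    uniq r -> {in r &, forall i j, i != j -> [disjoint A i & A j]%B} ->
  \big[mul/one]_(i <- r | P i) partial_sum (A i)
  = partial_sum (\bigcup_(i <- r | P i) A i).
Proof.
elim: r => [_ _|i r IHr /andP[ir ur] Adis]; first by rewrite !big_nil partial_sum0.
have {}IHr : \big[mul/one]_(j <- r | P j) partial_sum (A j)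
             = partial_sum (\bigcup_(j <- r | P j) A j).
  by apply: IHr ur _ => j k jr kr; apply: Adis; rewrite inE ?jr ?kr orbT.
rewrite !big_cons; case: ifP => // Pi; rewrite partial_sumU ?IHr //.
rewrite big_seq_cond; apply: (big_ind (fun S : {set X} => is_true [disjoint A i & S])).
- by rewrite finset.disjoints_subset finset.setC0 finset.subsetT.
- by move=> S1 S2; rewrite !finset.disjoints_subset finset.setCU finset.subsetI => -> ->.
move=> j /andP[jr _]; apply: Adis; rewrite ?inE ?eqxx ?jr ?orbT //.
by apply: contraNneq ir => ->.
Qed.

Lemma partial_sum1 (x : X) :
  partial_sum [set x] = \sum_(c : T x | ok c) W (finfun (dfwith e c)).
Proof.
rewrite /partial_sum (reindex_onto (fun c => finfun (dfwith e c) : I) (fun u => u x)).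
  apply: eq_bigl => c; rewrite ffunE dfwith_in eqxx andbT.
  apply/admissibleP/idP => [/(_ x)|okc y]; first by rewrite inE eqxx ffunE dfwith_in.
  rewrite inE ffunE; case: (eqVneq y x) => [->|yx]; first by rewrite dfwith_in.
  by rewrite dfwith_out 1?eq_sym.
move=> u /admissibleP u1; apply/ffunP => y; rewrite ffunE.
case: (eqVneq x y) => [<-|xy]; first by rewrite dfwith_in.
by rewrite dfwith_out //; move: (u1 y); rewrite inE eq_sym (negbTE xy) => /eqP.
Qed.

Lemma partial_sumT : partial_sum finset.setT = \sum_(u : I | [forall x, ok (u x)]) W u.
Proof. by apply: eq_bigl => u; apply: eq_forallb => x; rewrite inE. Qed.

Variable deg : X -> int.

Lemma sum_dffun_factorization :
  \sum_(u : I | [forall x, ok (u x)]) W u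
  = \big[mul/one]_(n <- degs deg) \big[mul/one]_(x in K deg n)
      \sum_(c : T x | ok c) W (finfun (dfwith e c)).
Proof.
have inner n : \big[mul/one]_(x in K deg n) \sum_(c : T x | ok c) W (finfun (dfwith e c))
               = partial_sum (K deg n).
  under eq_bigr do rewrite -partial_sum1.
  rewrite big_partial_sum ?index_enum_uniq //; last first.
    by move=> x y _ _ xy; rewrite finset.disjoints1 inE.
  congr partial_sum; apply/setP => y; apply/bigcupP/idP => [[x xK /set1P -> //] | yK].
  by exists y; rewrite ?set11.
rewrite -partial_sumT; under eq_bigr do rewrite inner.
rewrite big_partial_sum ?undup_uniq //; last first.
  move=> m n _ _ mn; rewrite finset.disjoints_subset.
  by apply/fintype.subsetP => y; rewrite !inE => /eqP ->.
congr partial_sum; apply/setP => y; rewrite inE.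
have y_deg : deg y \in degs deg by rewrite mem_undup map_f ?mem_enum.
by rewrite (big_rem _ y_deg) inE /K inE eqxx.
Qed.

End Factorization.

Lemma fsum_reindex (C : finType) (V : choiceType) (M : nmodType) (D : set V)
    (Q : pred C) (h : C -> V) (F : V -> M) :
  set_bij [set` Q] D h -> \sum_(v \in D) F v = \sum_(c | Q c) F (h c).
Proof.
move=> hbij; rewrite (reindex_fsbig h _ _ _ hbij) -(bigfs _ (index_enum_uniq C)) //.
by move=> c _; rewrite mem_index_enum.
Qed.

Section CharacterExponents.
Variable V : finZmodType.

Lemma mulrn_card (g : V) : g *+ #|V| = 0.
Proof. by rewrite -cardsT -FinRing.zmodXgE expg_cardG ?inE. Qed.

Lemma card_finZmod_gt0 : (0 < #|V|)%N.
Proof. by apply/card_gt0P; exists 0. Qed.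

Definition unit_root : algC := sval (C_prim_root_exists card_finZmod_gt0).

Lemma unit_root_prim : #|V|.-primitive_root unit_root.
Proof. exact: svalP (C_prim_root_exists _). Qed.

Definition exp_char (c : {ffun V -> 'I_#|V|}) : {ffun V -> algC} :=
  [ffun g => unit_root ^+ c g].

Definition exp_zero : {ffun V -> 'I_#|V|} := [ffun=> Ordinal card_finZmod_gt0].

Lemma exp_char_zero : exp_char exp_zero = [ffun=> 1].
Proof. by apply/ffunP => g; rewrite !ffunE expr0. Qed.

Lemma exp_char_inj : injective exp_char.
Proof.
move=> c c' /ffunP cc'; apply/ffunP => g; move: (cc' g); rewrite !ffunE => /eqP.
by rewrite (eq_prim_root_expr unit_root_prim) !modn_small // => /eqP/ord_inj.
Qed.

Lemma is_char_exp_card (r : {ffun V -> algC}) g :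
  is_char (fun a b : V => a + b) r -> r g ^+ #|V| = 1.
Proof.
move=> r_char; have r_mulrn n : r (g *+ n) = r g ^+ n.
  by elim: n => [|n IHn]; rewrite ?mulr0n ?expr0 ?(is_char_idem r_char (addr0 0)) //
    mulrS (proj1 r_char) IHn exprS.
by rewrite -r_mulrn mulrn_card (is_char_idem r_char (addr0 0)).
Qed.

Lemma exp_char_onto (r : {ffun V -> algC}) :
  is_char (fun a b : V => a + b) r -> exists c, exp_char c = r.
Proof.
move=> r_char; have r_root g : exists i : 'I_#|V|, r g = unit_root ^+ i.
  by have [i ->] := prim_rootP unit_root_prim (is_char_exp_card g r_char); exists i.
have [c rc] := fin_all_exists r_root.
by exists (finfun c); apply/ffunP => g; rewrite !ffunE rc.
Qed.

End CharacterExponents.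

Section OperatorSums.
Variables (X : finType) (deg : X -> int) (bdC : X -> X -> int)
  (G : int -> finZmodType) (dG : forall k : int, {additive G k -> G (k - 1)}).
Local Notation opmul := (@opmul X deg G).
Local Notation opone := (opone deg G).
Local Notation opmul_factorization := (sum_dffun_factorization
  (@opmul0l X deg G) (@opmul0r X deg G) (@opmulDl X deg G) (@opmulDr X deg G)).

Lemma sum_Aop_factorization (s : {ffun cochain deg G (-1) -> algC}) :
  is_char (@hadd X deg G (-1)) s ->
  \sum_(t : cochain deg G (-1)) opscale (s t) (Aop bdC dG t)
    = \big[opmul/opone]_(n <- degs deg) \big[opmul/opone]_(x in K deg n)
        \sum_(g : G (deg x - (-1)))
          opscale (s (@upstar X deg G (-1) x g)) (Aop bdC dG (@upstar X deg G (-1) x g)).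
Proof.
move=> s_char; pose W (t : cochain deg G (-1)) := opscale (s t) (Aop bdC dG t).
pose T x : finType := G (deg x - (-1)).
pose zero x : T x := 0; pose all_ok x (_ : T x) := true.
have W_base : W (finfun zero) = opone.
  by rewrite /W (is_char_idem s_char (hadd0 (cochain0 deg G (-1)))) opscale1 Aop0.
have W_splice (A B : {set X}) (u u' : cochain deg G (-1)) : [disjoint A & B]%B ->
    admissible zero all_ok A u -> admissible zero all_ok B u' ->
    W (splice A u u') = opmul (W u) (W u').
  move=> AB /admissibleP uA /admissibleP u'B.
  have -> : splice A u u' = hadd u u'.
    apply/ffunP => y; rewrite !ffunE; case: (boolP (y \in A)) => yA.
      by move: (u'B y); rewrite (disjointFr AB yA) => /eqP ->; rewrite addr0.
    by move: (uA y); rewrite (negbTE yA) => /eqP ->; rewrite add0r.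
  by rewrite /W opmul_scale opmul_Aop (proj1 s_char).
transitivity (\sum_(t : cochain deg G (-1) | [forall x, all_ok x (t x)]) W t).
  by apply: eq_bigl => t; apply/esym/forallP.
rewrite (opmul_factorization W_base W_splice deg).
apply: eq_bigr => n _; apply: eq_bigr => x _.
by apply: eq_bigr => g _; rewrite upstar_dfwith.
Qed.

Definition exponents (k : int) : finType := {ffun G k -> 'I_#|G k|}.
Local Notation expT x := (exponents (deg x - 1)).

Definition exp0 (x : X) : expT x := exp_zero (G (deg x - 1)).
Definition is_char_exp (x : X) (c : expT x) : bool := exp_char c \in @dualG G (deg x - 1).

Definition prod_char (u : {dffun forall x, expT x}) : {ffun cochain deg G 1 -> algC} :=
  [ffun f : cochain deg G 1 => \prod_x exp_char (u x) (f x)].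

Lemma exp_char_bij (k : int) :
  set_bij [set` fun c : exponents k => exp_char c \in @dualG G k] (@dualG G k) (@exp_char (G k)).
Proof.
split=> [c|c c' _ _ /exp_char_inj //|r r_char]; first by rewrite /= !inE.
by have [c rc] := exp_char_onto r_char; exists c; rewrite //= inE rc.
Qed.

Lemma prod_char_dfwith (x : X) (c : expT x) :
  prod_char (finfun (dfwith exp0 c)) = @lowstar X deg G 1 x (exp_char c).
Proof.
have ffun_dfwith y : finfun (dfwith exp0 c) y = dfwith exp0 c y by rewrite ffunE.
apply/ffunP => f; rewrite [RHS]ffunE ffunE (bigD1 x) //= ffun_dfwith dfwith_in.
rewrite big1 ?mulr1 // => y yx.
by rewrite ffun_dfwith dfwith_out 1?eq_sym // /exp0 exp_char_zero ffunE.
Qed.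

Lemma is_char_expP (x : X) (c : expT x) :
  is_char_exp c -> is_char (fun a b : G (deg x - 1) => a + b) (exp_char c).
Proof. by rewrite /is_char_exp inE. Qed.

Lemma prod_char_upstar (u : {dffun forall x, expT x}) (x : X) (g : G (deg x - 1)) :
  (forall y, is_char_exp (u y)) -> prod_char u (@upstar X deg G 1 x g) = exp_char (u x) g.
Proof.
move=> u_char; rewrite ffunE (bigD1 x) //= upstar_id big1 ?mulr1 // => y yx.
by rewrite upstar_neq 1?eq_sym // (is_char_idem (is_char_expP (u_char y)) (addr0 0)).
Qed.

Lemma prod_char_bij :
  set_bij [set` fun u : {dffun forall x, expT x} => [forall x, is_char_exp (u x)]]
    (@hom_lo X deg G 1) prod_char.
Proof.
split=> [u | u u' | m m_char]; rewrite /= ?inE.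
- move=> /forallP u_char; split=> [f t | f]; rewrite !ffunE; last first.
    by rewrite normr_prod big1 // => x _; apply: (proj2 (is_char_expP (u_char x))).
  rewrite -big_split; apply: eq_bigr => x _.
  by rewrite haddE; apply: (proj1 (is_char_expP (u_char x))).
- move=> /forallP u_char /forallP u'_char uu'; apply/ffunP => x.
  by apply/exp_char_inj/ffunP => g; rewrite -!prod_char_upstar // uu'.
have m_x x : is_char (fun a b : G (deg x - 1) => a + b) [ffun g => m (@upstar X deg G 1 x g)].
  by split=> [a b|a]; rewrite !ffunE ?upstarD ?(proj1 m_char) ?(proj2 m_char).
have [u ux] := fin_all_exists (fun x => exp_char_onto (m_x x)).
exists (finfun u).
  by rewrite /= ?inE; apply/forallP => x; rewrite /is_char_exp ffunE ux; apply/mem_set/m_x.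
apply/ffunP => f; rewrite ffunE (char_prod_upstar m_char f); apply: eq_bigr => x _.
by rewrite (ffunE u) ux ffunE.
Qed.

Lemma prod_char_exp0 : prod_char (finfun exp0) = [ffun=> 1].
Proof.
apply/ffunP => f; rewrite !ffunE big1 // => x _.
by rewrite /exp0 /exp_zero !ffunE expr0.
Qed.

Lemma prod_char_splice (A : {set X}) (u u' : {dffun forall x, expT x}) :
    (forall x, x \notin A -> u x = exp0 x) -> (forall x, x \in A -> u' x = exp0 x) ->
  prod_char (splice A u u') = [ffun f => prod_char u f * prod_char u' f].
Proof.
move=> u_out u'_in; apply/ffunP => f; rewrite !ffunE -big_split /=; apply: eq_bigr => x _.
rewrite !ffunE; case: (boolP (x \in A)) => xA.
  by rewrite (u'_in x xA) /exp0 /exp_zero ffunE expr0 mulr1.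
by rewrite (u_out x xA) /exp0 /exp_zero ffunE expr0 mul1r.
Qed.

Lemma sum_Bop_factorization (v : cochain deg G 1) :
  \sum_(m \in @hom_lo X deg G 1) opscale (m v) (Bop bdC dG m)
    = \big[opmul/opone]_(n <- degs deg) \big[opmul/opone]_(x in K deg n)
        \sum_(r \in @dualG G (deg x - 1))
          opscale (@lowstar X deg G 1 x r v) (Bop bdC dG (@lowstar X deg G 1 x r)).
Proof.
pose W u := opscale (prod_char u v) (Bop bdC dG (prod_char u)).
have W_base : W (finfun exp0) = opone by rewrite /W prod_char_exp0 ffunE opscale1 Bop1.
have W_splice (A B : {set X}) u u' : [disjoint A & B]%B ->
    admissible exp0 is_char_exp A u -> admissible exp0 is_char_exp B u' ->
    W (splice A u u') = opmul (W u) (W u').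
  move=> AB /admissibleP uA /admissibleP u'B.
  rewrite /W opmul_scale opmul_Bop prod_char_splice ?ffunE // => x.
    by move: (uA x) => /[swap] /negbTE -> /eqP.
  by move=> xA; move: (u'B x); rewrite (disjointFr AB xA) => /eqP.
rewrite (fsum_reindex _ prod_char_bij) (opmul_factorization W_base W_splice deg).
apply: eq_bigr => n _; apply: eq_bigr => x _.
rewrite (fsum_reindex _ (exp_char_bij (deg x - 1))); apply: eq_bigr => c _.
by rewrite /W prod_char_dfwith.
Qed.

End OperatorSums.

Unset Implicit Arguments.

Theorem proposition12
  (X : finType) (deg : X -> int) (bdC : X -> X -> int)
  (G : int -> finZmodType) (dG : forall k : int, {additive G k -> G (k - 1)})
  (HbdC : forall x y : X, bdC x y != 0 -> deg y = deg x - 1)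
  (HCC : forall x z : X, \sum_(y : X) bdC x y * bdC y z = 0)
  (HGG : forall (k : int) (a : G k), dG (k - 1) (dG k a) = 0)
  (s : {ffun cochain deg G (-1) -> algC}) (Hs : @hom_lo X deg G (-1) s)
  (v : cochain deg G 1) :
  \sum_(t : cochain deg G (-1)) opscale (s t) (Aop bdC dG t)
    = \big[@opmul X deg G/opone deg G]_(n <- degs deg)
        \big[@opmul X deg G/opone deg G]_(x in K deg n)
          \sum_(g : G (deg x - (-1))) opscale (s (@upstar X deg G (-1) x g)) (Aop bdC dG (@upstar X deg G (-1) x g))
  /\
  \sum_(m \in @hom_lo X deg G 1) opscale (m v) (Bop bdC dG m)
    = \big[@opmul X deg G/opone deg G]_(n <- degs deg)
        \big[@opmul X deg G/opone deg G]_(x in K deg n)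
          \sum_(r \in @dualG G (deg x - 1))
            opscale (@lowstar X deg G 1 x r v) (Bop bdC dG (@lowstar X deg G 1 x r)).
Proof.
split; [exact: sum_Aop_factorization | exact: sum_Bop_factorization].
Qed.
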